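(* The graph $G$ defined below is countable, connected and arc transitive, and it has infinite motion.
   Context: Let $\mathbb Q^+=\{q^+: q\in\mathbb Q\}$ and $\mathbb Q^-=\{q^-: q\in\mathbb Q\}$ be two disjoint copies of $\mathbb Q$. $G$ is the simple undirected graph with vertex set $V=\mathbb Q^+\cup\mathbb Q^-$ in which the edges are exactly the pairs $\{q^+,r^-\}$ with $q,r\in\mathbb Q$ and $q<r$ (there are no edges inside $\mathbb Q^+$ or inside $\mathbb Q^-$). A graph is arc transitive if its automorphism group acts transitively on ordered pairs $(u,v)$ of adjacent vertices. A graph has infinite motion if every non-identity automorphism moves infinitely many vertices. *)

From HB Require Import structures.
From mathcomp Require Import all_boot all_order all_algebra.
From Stdlib Require Import Relations.
Set Implicit Arguments. Unset Strict Implicit. Unset Printing Implicit Defensive.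
Import Order.TTheory GRing.Theory Num.Theory.
Local Open Scope ring_scope.

(* Vertex set V = Q^+ ∪ Q^- : [inl q] is q^+, [inr r] is r^-. *)
Definition V : Type := (rat + rat)%type.

Definition adj (u v : V) : Prop :=
  match u, v with
  | inl q, inr r => q < r
  | inr r, inl q => q < r
  | _, _ => False
  end.

Definition is_aut (f : V -> V) : Prop :=
  bijective f /\ forall u v : V, adj u v <-> adj (f u) (f v).

Definition countable_V : Prop := exists g : V -> nat, injective g.

Definition connected_G : Prop := forall u v : V, clos_refl_trans V adj u v.

Definition arc_transitive_G : Prop :=
  forall u v u' v' : V, adj u v -> adj u' v' ->
    exists f, is_aut f /\ f u = u' /\ f v = v'.

Definition infinite_motion_G : Prop :=
  forall f, is_aut f -> (exists x, f x <> x) ->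
    ~ (exists s : seq V, forall x, f x <> x -> x \in s).

(* G is arc transitive because the increasing affine maps x |-> a x + b
   (applied to both copies of Q) act transitively on the arcs from Q^+ to
   Q^-, and the reflection q^+ |-> (-q)^-, r^- |-> (-r)^+ swaps the two
   directions.  For infinite motion: if an automorphism f moves x but fixes
   every vertex outside a finite set, then x and f x have the same neighbours
   outside that set; but two distinct vertices disagree on the adjacency of
   all vertices over a nonempty open interval (or half-line) of Q, and such
   an interval meets the complement of every finite set. *)

From HB Require Import structures.
From mathcomp Require Import all_boot all_order all_algebra.
From mathcomp Require Import ring lra.
From Stdlib Require Import Relations.
Set Implicit Arguments. Unset Strict Implicit. Unset Printing Implicit Defensive.
Import Order.TTheory GRing.Theory Num.Theory.
Local Open Scope ring_scope.

Lemma adj_sym (u v : V) : adj u v -> adj v u.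
Proof. by case: u; case: v. Qed.

Lemma countable_V_holds : countable_V.
Proof. by exists pickle; apply: pcan_inj pickleK_inv. Qed.

Lemma connect_plus (q p : rat) : clos_refl_trans V adj (inl q) (inl p).
Proof.
have le_q : q <= Num.max q p by rewrite le_max lexx.
have le_p : p <= Num.max q p by rewrite le_max lexx orbT.
apply: (rt_trans _ _ _ (inr (Num.max q p + 1))); apply: rt_step => /=; lra.
Qed.

Lemma connected_G_holds : connected_G.
Proof.
have to_plus u p : clos_refl_trans V adj u (inl p).
  case: u => [q|r]; first exact: connect_plus.
  apply: (rt_trans _ _ _ (inl (r - 1))); first by apply: rt_step => /=; lra.
  exact: connect_plus.
move=> u [p|r]; first exact: to_plus.
apply: (rt_trans _ _ _ (inl (r - 1))); first exact: to_plus.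
by apply: rt_step => /=; lra.
Qed.

Lemma is_aut_comp (f g : V -> V) : is_aut f -> is_aut g -> is_aut (f \o g).
Proof.
move=> [bij_f adj_f] [bij_g adj_g]; split; first exact: bij_comp.
by move=> u v; rewrite (adj_g u v); apply: adj_f.
Qed.

Definition affine_map (a b : rat) (v : V) : V :=
  match v with inl q => inl (a * q + b) | inr r => inr (a * r + b) end.

Lemma is_aut_affine (a b : rat) : 0 < a -> is_aut (affine_map a b).
Proof.
move=> a_gt0; split.
  by exists (affine_map a^-1 (- b / a)) => -[q|r] /=; congr (_ _); field; lra.
by move=> [q|r] [q'|r'] //=; rewrite ltrD2r ltr_pM2l.
Qed.

Definition reflection (v : V) : V :=
  match v with inl q => inr (- q) | inr r => inl (- r) end.

Lemma is_aut_reflection : is_aut reflection.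
Proof.
split; first by exists reflection => -[q|r] /=; rewrite opprK.
by move=> [q|r] [q'|r'] //=; rewrite ltrN2.
Qed.

Lemma arc_to_plus_minus (q r q' r' : rat) : q < r -> q' < r' ->
  exists f, [/\ is_aut f, f (inl q) = inl q' & f (inr r) = inr r'].
Proof.
move=> lt_qr lt_qr'.
pose a := (r' - q') / (r - q).
have a_gt0 : 0 < a by rewrite divr_gt0 // subr_gt0.
exists (affine_map a (q' - a * q)); split; first exact: is_aut_affine.
  by rewrite /= /a; congr inl; ring.
by rewrite /= /a; congr inr; field; lra.
Qed.

Lemma arc_to_minus_plus (q r q' r' : rat) : q < r -> q' < r' ->
  exists f, [/\ is_aut f, f (inl q) = inr r' & f (inr r) = inl q'].
Proof.
move=> lt_qr lt_qr'.
have [|g [aut_g gq gr]] := @arc_to_plus_minus q r (- r') (- q') lt_qr; first lra.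
exists (reflection \o g); split; first exact: is_aut_comp is_aut_reflection aut_g.
  by rewrite /= gq /= opprK.
by rewrite /= gr /= opprK.
Qed.

Lemma arc_from_plus_minus (q r : rat) (u' v' : V) : q < r -> adj u' v' ->
  exists f, [/\ is_aut f, f (inl q) = u' & f (inr r) = v'].
Proof.
case: u' v' => [q'|r'] [q''|r''] //= lt_qr lt'.
  exact: arc_to_plus_minus.
exact: arc_to_minus_plus.
Qed.

Lemma arc_transitive_G_holds : arc_transitive_G.
Proof.
move=> [q|r] [q'|r'] u' v' //= adj_uv adj_uv'.
  by have [f [? ? ?]] := arc_from_plus_minus adj_uv adj_uv'; exists f.
by have [f [? ? ?]] := arc_from_plus_minus adj_uv (adj_sym adj_uv'); exists f.
Qed.

Lemma exists_between_notin (R : realFieldType) (s : seq R) (p q : R) :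
  p < q -> exists r, [/\ p < r, r < q & r \notin s].
Proof.
elim: s q => [|t s IHs] q lt_pq; first by exists ((p + q) / 2); split => //; lra.
case: (ltrP p t) => [lt_pt|le_tp].
  have [|r [lt_pr]] := IHs (Num.min q t); first by rewrite lt_min lt_pq.
  rewrite lt_min => /andP[lt_rq lt_rt] r_s.
  by exists r; split; rewrite // in_cons negb_or r_s andbT lt_eqF.
have [r [lt_pr lt_rq r_s]] := IHs q lt_pq.
by exists r; split; rewrite // in_cons negb_or r_s andbT gt_eqF // (le_lt_trans le_tp).
Qed.

Definition coord (v : V) : rat := match v with inl t => t | inr t => t end.

(* Same side: the witnesses lie strictly between the two vertices, on the
   other side.  Different sides: far enough out, only one is adjacent. *)
Lemma adj_separates (s : seq rat) (u v : V) : u <> v ->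
  exists z, coord z \notin s /\ ~ (adj u z <-> adj v z).
Proof.
case: u v => [q|q] [p|p] neq_uv.
- have [lt_pq|lt_qp|eq_pq] := ltgtP p q; last by case: neq_uv; rewrite eq_pq.
    have [r [? ? r_s]] := exists_between_notin s lt_pq.
    by exists (inr r); split => //=; lra.
  have [r [? ? r_s]] := exists_between_notin s lt_qp.
  by exists (inr r); split => //=; lra.
- have [r [lt_qr _ r_s]] := exists_between_notin s (ltrDl q 1).
  by exists (inr r); split => //= -[/(_ lt_qr)].
- have lt_q1q : q - 1 < q by lra.
  have [r [_ lt_rq r_s]] := exists_between_notin s lt_q1q.
  by exists (inl r); split => //= -[/(_ lt_rq)].
- have [lt_pq|lt_qp|eq_pq] := ltgtP p q; last by case: neq_uv; rewrite eq_pq.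
    have [r [? ? r_s]] := exists_between_notin s lt_pq.
    by exists (inl r); split => //=; lra.
  have [r [? ? r_s]] := exists_between_notin s lt_qp.
  by exists (inl r); split => //=; lra.
Qed.

Lemma infinite_motion_G_holds : infinite_motion_G.
Proof.
move=> f [_ adj_f] [x moved_x] [s moved_in_s].
have [z [z_notin sep]] := adj_separates [seq coord v | v <- s] (nesym moved_x).
have fixed_z : f z = z.
  case: (f z =P z) => // /moved_in_s z_s.
  by case/negP: z_notin; apply: map_f.
by apply: sep; rewrite -{2}fixed_z; apply: adj_f.
Qed.

Theorem mainTheorem3 :
  countable_V /\ connected_G /\ arc_transitive_G /\ infinite_motion_G.
Proof.
split; first exact: countable_V_holds.
split; first exact: connected_G_holds.
split; first exact: arc_transitive_G_holds.
exact: infinite_motion_G_holds.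
Qed.
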